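(* Let $r\ge1$ and let $x_1,\ldots,x_r,y_1,\ldots,y_r$ be positive integers which are the parameters of a balanced lobster, i.e. they satisfy, for all $i=1,\ldots,r$: $x_i=y_{r-\frac{i-1}{2}}$ and $y_i=x_{r-\frac{i-1}{2}}$ when $i$ is odd, and $x_i=x_{i/2}$ and $y_i=y_{i/2}$ when $i$ is even. Let $i$ be an odd integer and $j$ an even integer with $1\le i,j\le r$. Then (i) $\sum_{t=\frac{i+1}{2}}^{i}x_t=\sum_{t=r-\frac{i-1}{2}}^{r}y_t$; (ii) $\sum_{t=\frac{i+1}{2}}^{i}y_t=\sum_{t=r-\frac{i-1}{2}}^{r}x_t$; (iii) $\sum_{t=\frac{j}{2}+1}^{j}x_t=\sum_{t=r-\frac{j}{2}+1}^{r}y_t$; (iv) $\sum_{t=\frac{j}{2}+1}^{j}y_t=\sum_{t=r-\frac{j}{2}+1}^{r}x_t$.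
   Context: The lobster in question consists of adjacent vertices $v_1,v_2$; $v_1$ is adjacent to $s_1\ge0$ leaves and to vertices $u_{11},\ldots,u_{1r}$, where $u_{1i}$ is adjacent to $x_i\ge1$ further leaves; $v_2$ is adjacent to $s_2\ge0$ leaves and to vertices $u_{21},\ldots,u_{2r}$, where $u_{2j}$ is adjacent to $y_j\ge1$ further leaves. It is called balanced when the displayed relations between the $x_i$ and $y_i$ hold. *)

From mathcomp Require Import all_boot.
Set Implicit Arguments. Unset Strict Implicit. Unset Printing Implicit Defensive.

(* Parameters of the lobster are indexed 1..r: x t, y t for 1 <= t <= r. *)
Definition balanced (r : nat) (x y : nat -> nat) : Prop :=
  forall i, 1 <= i <= r ->
    (odd i -> x i = y (r - (i - 1) %/ 2) /\ y i = x (r - (i - 1) %/ 2)) /\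
    (~~ odd i -> x i = x (i %/ 2) /\ y i = y (i %/ 2)).

(* Write the balanced conditions for a pair of parameter sequences (F, G) as
   F (2m+1) = G (r-m) and F (2m) = F m.  Moving the window [m+1, 2m+1] one
   step to the right loses F (m+1), which the new even index 2m+2 gives back,
   and gains F (2m+3) = G (r-m-1), which is exactly the new term of the window
   ending at r.  The even window [n+1, 2n] is the odd window [n, 2n-1] after
   the same trade of F n for F (2n). *)

From mathcomp Require Import all_boot.
From mathcomp Require Import zify.

Set Implicit Arguments.
Unset Strict Implicit.
Unset Printing Implicit Defensive.

Section BalancedWindows.

Variables (r : nat) (F G : nat -> nat).

Hypothesis F_odd : forall m, (2 * m).+1 <= r -> F (2 * m).+1 = G (r - m).
Hypothesis F_even : forall n, 0 < n -> 2 * n <= r -> F (2 * n) = F n.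

Lemma F_even_succ m : (2 * m).+2 <= r -> F (2 * m).+2 = F m.+1.
Proof. by move=> le_r; rewrite -(@F_even m.+1); [congr F | |]; lia. Qed.

Lemma sum_odd_window m : (2 * m).+1 <= r ->
  \sum_(m.+1 <= t < (2 * m).+2) F t = \sum_(r - m <= t < r.+1) G t.
Proof.
elim: m => [|m IH] le_r; first by rewrite subn0 !big_nat1 (F_odd le_r) subn0.
have window_l : \sum_(m.+2 <= t < (2 * m.+1).+2) F t
    = \sum_(m.+1 <= t < (2 * m).+2) F t + F (2 * m.+1).+1.
  rewrite (_ : (2 * m.+1).+1 = (2 * m).+3); last by lia.
  rewrite (big_ltn (m := m.+1)); last by lia.
  rewrite big_nat_recr /=; last by lia.
  rewrite big_nat_recr /= ?F_even_succ; lia.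
have window_r : \sum_(r - m.+1 <= t < r.+1) G t
    = G (r - m.+1) + \sum_(r - m <= t < r.+1) G t.
  by rewrite big_ltn; [rewrite (_ : (r - m.+1).+1 = r - m) //| ]; lia.
by rewrite window_l window_r IH ?F_odd //; lia.
Qed.

Lemma sum_even_window n : 0 < n -> 2 * n <= r ->
  \sum_(n.+1 <= t < (2 * n).+1) F t = \sum_(r - n + 1 <= t < r.+1) G t.
Proof.
case: n => [//|k] _ le_r.
rewrite (_ : r - k.+1 + 1 = r - k) -?sum_odd_window; [|lia|lia].
rewrite (_ : (2 * k.+1).+1 = (2 * k).+3); last by lia.
rewrite big_nat_recr /=; last by lia.
rewrite F_even_succ; last by lia.
by rewrite (big_ltn (m := k.+1)); lia.
Qed.

End BalancedWindows.

Section Balanced.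

Variables (r : nat) (x y : nat -> nat).
Hypothesis bal : balanced r x y.

Lemma balanced_odd m : (2 * m).+1 <= r ->
  x (2 * m).+1 = y (r - m) /\ y (2 * m).+1 = x (r - m).
Proof.
move=> le_r; have [odd_eq _] := @bal ((2 * m).+1) ltac:(lia).
have half_eq : ((2 * m).+1 - 1) %/ 2 = m by lia.
by rewrite half_eq in odd_eq; apply: odd_eq; rewrite oddS oddM.
Qed.

Lemma balanced_even n : 0 < n -> 2 * n <= r -> x (2 * n) = x n /\ y (2 * n) = y n.
Proof.
move=> n_gt0 le_r; have [_ even_eq] := @bal (2 * n) ltac:(lia).
have half_eq : (2 * n) %/ 2 = n by lia.
by rewrite half_eq in even_eq; apply: even_eq; rewrite oddM.
Qed.

End Balanced.

Theorem lemma4p8 (r : nat) (x y : nat -> nat) :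
  1 <= r ->
  (forall t, 1 <= t <= r -> 0 < x t /\ 0 < y t) ->
  balanced r x y ->
  forall i j : nat, odd i -> ~~ odd j -> 1 <= i <= r -> 1 <= j <= r ->
    [/\ \sum_((i + 1) %/ 2 <= t < i.+1) x t = \sum_(r - (i - 1) %/ 2 <= t < r.+1) y t,
        \sum_((i + 1) %/ 2 <= t < i.+1) y t = \sum_(r - (i - 1) %/ 2 <= t < r.+1) x t,
        \sum_(j %/ 2 + 1 <= t < j.+1) x t = \sum_(r - j %/ 2 + 1 <= t < r.+1) y t
      & \sum_(j %/ 2 + 1 <= t < j.+1) y t = \sum_(r - j %/ 2 + 1 <= t < r.+1) x t].
Proof.
move=> _ _ bal i j odd_i even_j le_i le_j.
have [m def_i] : exists m, i = (2 * m).+1.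
  by exists i./2; rewrite -{1}(odd_double_half i) odd_i -mul2n.
have [n def_j] : exists n, j = 2 * n.
  by exists j./2; rewrite -{1}(odd_double_half j) (negbTE even_j) -mul2n.
have half_i : (i + 1) %/ 2 = m.+1 by lia.
have half_i' : (i - 1) %/ 2 = m by lia.
have half_j : j %/ 2 = n by lia.
rewrite half_i half_i' half_j addn1 def_i def_j.
have x_odd k (le_r : (2 * k).+1 <= r) := proj1 (balanced_odd bal le_r).
have y_odd k (le_r : (2 * k).+1 <= r) := proj2 (balanced_odd bal le_r).
have x_even k (k_gt0 : 0 < k) (le_r : 2 * k <= r) := proj1 (balanced_even bal k_gt0 le_r).
have y_even k (k_gt0 : 0 < k) (le_r : 2 * k <= r) := proj2 (balanced_even bal k_gt0 le_r).
split.
- by apply: (sum_odd_window x_odd x_even); lia.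
- by apply: (sum_odd_window y_odd y_even); lia.
- by apply: (sum_even_window x_odd x_even); lia.
- by apply: (sum_even_window y_odd y_even); lia.
Qed.
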